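(* Let $a>0$ with $2a/\sqrt3<\pi/2$, let $0<c<2\pi/3$, and let $\varphi_c:\mathbb{R}^3\to\mathbb{R}^3$ be $(p,z)\mapsto(r_{2\pi/3}(p),z+c)$, where $r_{2\pi/3}$ is the rotation of $\mathbb{R}^2$ by angle $2\pi/3$ about the origin; $\varphi_c$ is an isometry of $(\mathbb{R}^3,h)$. Let $\gamma_0$ be the vertical segment from $(0,0,z_0)$ to $(0,0,z_0+c)=\varphi_c(0,0,z_0)$. Let $t\mapsto\gamma_t$, $t\in(-\varepsilon,\varepsilon)$, be a piecewise smooth variation of $\gamma_0$ such that each $\gamma_t$ is an $h$-geodesic contained in the interior of the prism $D_0$ (not meeting the singular set), joining a point $m_t$ to $\varphi_c(m_t)$, with $m_0=(0,0,z_0)$ and $\frac{d}{dt}m_t|_{t=0}$ a nonzero horizontal vector. Then the second variation of length at $\gamma_0$ is strictly positive: $\frac{d^2}{dt^2}\big|_{t=0}L(\gamma_t)>0$.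
   Context: $\Delta\subset\mathbb{R}^2$ is the hexagonal lattice generated by $(2a,0)$ and $(a,a\sqrt3)$, and $D_0=V_0\times\mathbb{R}$ is the vertical prism over the Voronoi cell $V_0$ (regular hexagon of inradius $a$ centered at the origin). $h=dx^2+dy^2+\cos^2\!\big(\mathrm{dist}((x,y),\Delta)\big)\,dz^2$ on $\mathbb{R}^3$; in the interior of $D_0$, in cylindrical coordinates about the $z$-axis, $h=dr^2+r^2d\theta^2+\cos^2 r\,dz^2$, which is smooth there. The singular set is the union of the boundaries of the prisms $D_p$, $p\in\Delta$. $L(\gamma)=\int (h(\gamma',\gamma'))^{1/2}ds$. *)

From Stdlib Require Import Reals ZArith.
From Coquelicot Require Import Coquelicot.
Open Scope R_scope.

Definition lat_pt (a : R) (m n : Z) : R * R :=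
  (2 * a * IZR m + a * IZR n, a * sqrt 3 * IZR n).

Definition latdist (a x y : R) : R :=
  real (Glb_Rbar (fun d => exists m n : Z,
     d = sqrt ((x - fst (lat_pt a m n)) ^ 2 + (y - snd (lat_pt a m n)) ^ 2))).

(** Coefficient of dz^2 in h : cos^2 (dist((x,y),Delta)). *)
Definition hF (a x y : R) : R := (cos (latdist a x y)) ^ 2.

Definition dFx (a x y : R) : R := Derive (fun u => hF a u y) x.
Definition dFy (a x y : R) : R := Derive (fun u => hF a x u) y.

Definition h_quad (a : R) (p v : R * R * R) : R :=
  let '(x, y, _) := p in let '(vx, vy, vz) := v in
  vx ^ 2 + vy ^ 2 + hF a x y * vz ^ 2.

(** (x,y,z) lies in the interior of the prism D_0 = V_0 x R: (x,y) is
    strictly closer to the origin than to every other lattice point. *)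
Definition in_int_D0 (a x y : R) : Prop :=
  forall m n : Z, (m, n) <> (0%Z, 0%Z) ->
    x ^ 2 + y ^ 2 < (x - fst (lat_pt a m n)) ^ 2 + (y - snd (lat_pt a m n)) ^ 2.

Definition phi (c : R) (p : R * R * R) : R * R * R :=
  let '(x, y, z) := p in
  (x * cos (2 * PI / 3) - y * sin (2 * PI / 3),
   x * sin (2 * PI / 3) + y * cos (2 * PI / 3), z + c).

(** A curve s |-> (X s, Y s, Z s), s in [0,1], is an h-geodesic contained in
    the interior of D_0: it stays in the interior (where h is smooth) and
    satisfies the geodesic equations of h = dx^2 + dy^2 + F(x,y) dz^2. *)
Definition is_h_geodesic (a : R) (X Y Z : R -> R) : Prop :=
  exists X1 Y1 Z1 X2 Y2 Z2 : R -> R,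
  forall s, 0 <= s <= 1 ->
    in_int_D0 a (X s) (Y s) /\
    is_derive X s (X1 s) /\ is_derive Y s (Y1 s) /\ is_derive Z s (Z1 s) /\
    is_derive X1 s (X2 s) /\ is_derive Y1 s (Y2 s) /\ is_derive Z1 s (Z2 s) /\
    X2 s = / 2 * dFx a (X s) (Y s) * (Z1 s) ^ 2 /\
    Y2 s = / 2 * dFy a (X s) (Y s) * (Z1 s) ^ 2 /\
    Z2 s = - (dFx a (X s) (Y s) * X1 s + dFy a (X s) (Y s) * Y1 s) * Z1 s
             / hF a (X s) (Y s).

Fixpoint Ck2 (k : nat) (eps : R) (f : R -> R -> R) : Prop :=
  match k with
  | O => forall t s, Rabs t < eps ->
           continuous (fun p : R * R => f (fst p) (snd p)) (t, s)
  | S k' =>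
      (forall t s, Rabs t < eps ->
           continuous (fun p : R * R => f (fst p) (snd p)) (t, s)) /\
      exists ft fs : R -> R -> R,
        (forall t s, Rabs t < eps ->
           is_derive (fun u => f u s) t (ft t s) /\
           is_derive (fun u => f t u) s (fs t s)) /\
        Ck2 k' eps ft /\ Ck2 k' eps fs
  end.

Definition smooth2 (eps : R) (f : R -> R -> R) : Prop := forall k, Ck2 k eps f.

Definition Lh (a : R) (X Y Z : R -> R) : R :=
  RInt (fun s => sqrt (h_quad a (X s, Y s, Z s) (Derive X s, Derive Y s, Derive Z s)))
       0 1.

From Stdlib Require Import Reals ZArith Lra Lia.
From Coquelicot Require Import Coquelicot.
Open Scope R_scope.

(* On the axis [dF = 0], [F = 1] and the horizontal Hessian of [F = cos^2 r] is [-2 Id], so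
   horizontal Jacobi fields along the vertical segment satisfy [J'' = -c^2 J].  Each [gamma_t]
   is a geodesic on [[0, 1]], so its energy density [E] is constant in [s], [L = sqrt E], and
   the first variation formula gives [L' = [h(d gamma/dt, d gamma/ds)]_0^1 / L].  At [t = 0]
   this jump vanishes, and its derivative reduces to the boundary term [[<J, J'>]_0^1] of the
   horizontal Jacobi field [J], whose endpoint is its initial value [J(0) <> 0] rotated by
   [2 pi / 3].  Solving [J'' = -c^2 J] explicitly gives
   [L''(0) = 2 (cos c - cos (2 pi / 3)) |J(0)|^2 / sin c > 0]. *)

Lemma is_derive_eq (f : R -> R) (x l l' : R) : is_derive f x l -> l = l' -> is_derive f x l'.
Proof. now intros H <-. Qed.

Lemma is_derive_Rconst (k x : R) : is_derive (fun _ : R => k) x 0.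
Proof. apply (is_derive_const (V := R_NormedModule)). Qed.

Lemma is_derive_Rid (x : R) : is_derive (fun u : R => u) x 1.
Proof. apply (is_derive_id (K := R_AbsRing)). Qed.

Lemma is_derive_Rplus (f g : R -> R) (x a b : R) : is_derive f x a -> is_derive g x b ->
  is_derive (fun t => f t + g t) x (a + b).
Proof. apply (is_derive_plus (V := R_NormedModule)). Qed.

Lemma is_derive_Rminus (f g : R -> R) (x a b : R) : is_derive f x a -> is_derive g x b ->
  is_derive (fun t => f t - g t) x (a - b).
Proof. apply (is_derive_minus (V := R_NormedModule)). Qed.

Lemma is_derive_Rmult (f g : R -> R) (x a b : R) : is_derive f x a -> is_derive g x b ->
  is_derive (fun t => f t * g t) x (a * g x + f x * b).
Proof.
  intros Hf Hg. eapply is_derive_eq; [apply (is_derive_mult f g x a b Hf Hg)|].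
  - intros; apply Rmult_comm.
  - unfold plus, mult; simpl; ring.
Qed.

Lemma is_derive_Rsqr (f : R -> R) (x a : R) : is_derive f x a ->
  is_derive (fun t => f t ^ 2) x (2 * f x * a).
Proof. intros Hf. eapply is_derive_eq; [apply (is_derive_pow f 2 x a Hf)|simpl; ring]. Qed.

Lemma is_derive_cos_lin (k s : R) : is_derive (fun s => cos (k * s)) s (- k * sin (k * s)).
Proof.
  eapply is_derive_eq.
  - apply (is_derive_comp cos (fun s => k * s)); [apply is_derive_cos|].
    apply is_derive_scal, is_derive_Rid.
  - unfold scal; simpl; unfold mult; simpl; ring.
Qed.

Lemma is_derive_sin_lin (k s : R) : is_derive (fun s => sin (k * s)) s (k * cos (k * s)).
Proof.
  eapply is_derive_eq.
  - apply (is_derive_comp sin (fun s => k * s)); [apply is_derive_sin|].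
    apply is_derive_scal, is_derive_Rid.
  - unfold scal; simpl; unfold mult; simpl; ring.
Qed.

Lemma is_derive_agree_01 (f g : R -> R) (s l1 l2 : R) :
  0 <= s <= 1 -> (forall x, 0 <= x <= 1 -> f x = g x) ->
  is_derive f s l1 -> is_derive g s l2 -> l1 = l2.
Proof.
  intros Hs Hfg Hf Hg.
  pose proof (is_derive_Rminus f g s l1 l2 Hf Hg) as Hd. apply is_derive_Reals in Hd.
  destruct (Req_dec (l1 - l2) 0) as [|Hl]; [lra|exfalso].
  destruct (Hd (Rabs (l1 - l2)) ltac:(now apply Rabs_pos_lt)) as [[d Hdp] Hdd]; simpl in Hdd.
  set (m := Rmin (d / 2) (1 / 2)).
  assert (Hm : 0 < m <= d / 2 /\ m <= 1 / 2)
    by (unfold m; repeat split; [apply Rmin_pos; lra|apply Rmin_l|apply Rmin_r]).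
  set (k := if Rle_dec s (1 / 2) then m else - m).
  assert (Hk : k <> 0 /\ Rabs k < d /\ 0 <= s + k <= 1).
  { unfold k; destruct (Rle_dec s (1 / 2)); [rewrite Rabs_right|rewrite Rabs_Ropp, Rabs_right];
      repeat split; lra. }
  specialize (Hdd k (proj1 Hk) (proj1 (proj2 Hk))).
  replace ((f (s + k) - g (s + k) - (f s - g s)) / k - (l1 - l2)) with (- (l1 - l2)) in Hdd
    by (rewrite !Hfg by lra; field; tauto).
  rewrite Rabs_Ropp in Hdd. lra.
Qed.

Lemma locally_strip eps t (P : R -> Prop) :
  Rabs t < eps -> (forall u, Rabs u < eps -> P u) -> locally t P.
Proof.
  intros Ht HP. exists (mkposreal (eps - Rabs t) ltac:(lra)). intros u Hu. apply HP.
  change (Rabs (u - t) < eps - Rabs t) in Hu. pose proof (Rabs_triang_inv u t). lra.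
Qed.

Lemma locally_2d_strip eps t s (P : R -> R -> Prop) :
  Rabs t < eps -> (forall u v, Rabs u < eps -> P u v) -> locally_2d P t s.
Proof.
  intros Ht HP. exists (mkposreal (eps - Rabs t) ltac:(lra)). intros u v Hu _. apply HP.
  simpl in Hu. pose proof (Rabs_triang_inv u t). lra.
Qed.

Lemma locally_prod_strip eps t s (P : R * R -> Prop) :
  Rabs t < eps -> (forall u v, Rabs u < eps -> P (u, v)) -> locally (t, s) P.
Proof.
  intros Ht HP. exists (mkposreal (eps - Rabs t) ltac:(lra)). intros [u v] [Hu _]. apply HP.
  change (Rabs (u - t) < eps - Rabs t) in Hu. pose proof (Rabs_triang_inv u t). lra.
Qed.

Lemma is_derive_unique_strip (f g : R -> R) (eps t l1 l2 : R) :
  Rabs t < eps -> (forall u, Rabs u < eps -> f u = g u) ->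
  is_derive f t l1 -> is_derive g t l2 -> l1 = l2.
Proof.
  intros Ht Hfg H1 H2. rewrite <- (is_derive_unique g t l2 H2).
  symmetry. apply is_derive_unique. eapply is_derive_ext_loc; [|exact H1].
  now apply (locally_strip eps).
Qed.

Definition Dt (f : R -> R -> R) (t s : R) : R := Derive (fun u => f u s) t.
Definition Ds (f : R -> R -> R) (t s : R) : R := Derive (fun u => f t u) s.

Lemma continuous2_ext_strip eps (f g : R -> R -> R) t s :
  (forall t s, Rabs t < eps -> f t s = g t s) -> Rabs t < eps ->
  continuous (fun p : R * R => f (fst p) (snd p)) (t, s) ->
  continuous (fun p : R * R => g (fst p) (snd p)) (t, s).
Proof.
  intros Hfg Ht Hf. apply (continuous_ext_loc _ (fun p : R * R => f (fst p) (snd p))); [|exact Hf].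
  apply (locally_prod_strip eps); auto.
Qed.

Lemma Ck2_ext k eps (f g : R -> R -> R) :
  (forall t s, Rabs t < eps -> f t s = g t s) -> Ck2 k eps f -> Ck2 k eps g.
Proof.
  intros Hfg. destruct k as [|k]; simpl.
  - intros Hf t s Ht. apply (continuous2_ext_strip eps f); auto.
  - intros [Hcf [ft [fs [Hd Hk]]]].
    split; [intros t s Ht; apply (continuous2_ext_strip eps f); auto|].
    exists ft, fs. split; [|exact Hk].
    intros t s Ht. destruct (Hd t s Ht) as [H1 H2]. split.
    + eapply is_derive_ext_loc; [|exact H1]. apply (locally_strip eps); auto.
    + eapply is_derive_ext; [|exact H2]. auto.
Qed.

Section Smooth.

Variables (eps : R) (f : R -> R -> R).
Hypothesis Hf : smooth2 eps f.

Lemma smooth2_continuous t s : Rabs t < eps ->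
  continuous (fun p : R * R => f (fst p) (snd p)) (t, s).
Proof. exact (Hf 0%nat t s). Qed.

Lemma smooth2_is_derive t s : Rabs t < eps ->
  is_derive (fun u => f u s) t (Dt f t s) /\ is_derive (fun u => f t u) s (Ds f t s).
Proof.
  intros Ht. destruct (Hf 1%nat) as [_ [ft [fs [Hd _]]]]. destruct (Hd t s Ht) as [H1 H2].
  split; (eapply is_derive_eq; [eassumption|symmetry; now apply is_derive_unique]).
Qed.

Lemma smooth2_is_derive_t t s : Rabs t < eps -> is_derive (fun u => f u s) t (Dt f t s).
Proof. intros Ht. apply (smooth2_is_derive t s Ht). Qed.

Lemma smooth2_is_derive_s t s : Rabs t < eps -> is_derive (fun u => f t u) s (Ds f t s).
Proof. intros Ht. apply (smooth2_is_derive t s Ht). Qed.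

Lemma smooth2_Dt : smooth2 eps (Dt f).
Proof.
  intros k. destruct (Hf (S k)) as [_ [ft [fs [Hd [Hk _]]]]].
  apply (Ck2_ext k eps ft); auto. intros t s Ht. symmetry. apply is_derive_unique, Hd, Ht.
Qed.

Lemma smooth2_Ds : smooth2 eps (Ds f).
Proof.
  intros k. destruct (Hf (S k)) as [_ [ft [fs [Hd [_ Hk]]]]].
  apply (Ck2_ext k eps fs); auto. intros t s Ht. symmetry. apply is_derive_unique, Hd, Ht.
Qed.

End Smooth.

Lemma Dt_Ds eps f t s : smooth2 eps f -> Rabs t < eps -> Dt (Ds f) t s = Ds (Dt f) t s.
Proof.
  intros Hf Ht. apply Schwarz.
  - apply (locally_2d_strip eps); auto. intros u v Hu. repeat split; eexists.
    + now apply (smooth2_is_derive_t eps f).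
    + now apply (smooth2_is_derive_s eps f).
    + apply (smooth2_is_derive_t eps (Ds f)); [apply smooth2_Ds|]; auto.
    + apply (smooth2_is_derive_s eps (Dt f)); [apply smooth2_Dt|]; auto.
  - apply continuity_2d_pt_filterlim.
    exact (smooth2_continuous eps (Dt (Ds f)) (smooth2_Dt _ _ (smooth2_Ds _ _ Hf)) t s Ht).
  - apply continuity_2d_pt_filterlim.
    exact (smooth2_continuous eps (Ds (Dt f)) (smooth2_Ds _ _ (smooth2_Dt _ _ Hf)) t s Ht).
Qed.

Lemma smooth2_is_derive_t_Ds eps f t s : smooth2 eps f -> Rabs t < eps ->
  is_derive (fun u => Ds f u s) t (Ds (Dt f) t s).
Proof.
  intros Hf Ht. rewrite <- (Dt_Ds eps) by auto.
  apply (smooth2_is_derive_t eps); [apply smooth2_Ds|]; auto.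
Qed.

Lemma smooth2_is_derive_t_Ds2 eps f t s : smooth2 eps f -> Rabs t < eps ->
  is_derive (fun u => Ds (Ds f) u s) t (Ds (Ds (Dt f)) t s).
Proof.
  intros Hf Ht. eapply is_derive_eq.
  - apply (smooth2_is_derive_t eps); [apply smooth2_Ds, smooth2_Ds, Hf|exact Ht].
  - rewrite (Dt_Ds eps) by (auto; now apply smooth2_Ds).
    apply Derive_ext. intros u. now apply (Dt_Ds eps).
Qed.

Lemma is_derive_eps_continuous (f : R -> R) (x l : R) : is_derive f x l ->
  forall e, 0 < e -> exists d, 0 < d /\ forall y, Rabs (y - x) < d -> Rabs (f y - f x) < e.
Proof.
  intros Hd e He.
  assert (C : continuity_pt f x)
    by (apply derivable_continuous_pt; exists l; now apply is_derive_Reals).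
  destruct (C e He) as [d [Hd0 Hc]]. exists d. split; [exact Hd0|]. intros y Hy.
  destruct (Req_dec y x) as [->|Hne]; [rewrite Rminus_diag, Rabs_R0; exact He|].
  apply (Hc y). split; [split; [exact I|auto]|exact Hy].
Qed.

Lemma locally_lt_of_is_derive (f : R -> R) (x l b : R) : is_derive f x l -> f x < b ->
  locally x (fun u => f u < b).
Proof.
  intros Hd Hb. apply (ex_derive_continuous f x (ex_intro _ l Hd) (fun y => y < b)).
  now apply open_lt.
Qed.

Lemma hex_form_ge_4 (m n : Z) : (m, n) <> (0%Z, 0%Z) -> (4 <= (2*m+n)*(2*m+n) + 3*(n*n))%Z.
Proof.
  intros H. destruct (Z.eq_dec n 0) as [->|Hn].
  - assert (m <> 0%Z) by (intro; subst; apply H; auto). nia.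
  - destruct (Z_le_gt_dec 2 (Z.abs n)); [nia|].
    assert (n = 1 \/ n = -1)%Z as [-> | ->] by lia;
      [assert (2*m+1 <> 0)%Z by lia|assert (2*m+-1 <> 0)%Z by lia]; nia.
Qed.

Lemma lat_pt_norm_ge a m n : 0 < a -> (m, n) <> (0%Z, 0%Z) ->
  4 * a^2 <= (fst (lat_pt a m n))^2 + (snd (lat_pt a m n))^2.
Proof.
  intros Ha H. apply hex_form_ge_4, IZR_le in H.
  rewrite plus_IZR, !mult_IZR, plus_IZR, mult_IZR in H. simpl in H.
  assert (S3 : sqrt 3 * sqrt 3 = 3) by (apply sqrt_sqrt; lra).
  unfold lat_pt; cbn [fst snd].
  replace ((2 * a * IZR m + a * IZR n) ^ 2 + (a * sqrt 3 * IZR n) ^ 2)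
     with (a^2 * ((2 * IZR m + IZR n) * (2 * IZR m + IZR n) + 3 * (IZR n * IZR n)))
    by (replace 3 with (sqrt 3 * sqrt 3) at 1; ring).
  assert (0 < a^2) by nra. nra.
Qed.

Lemma sum_sq_le_dist (x y u v a : R) :
  x^2 + y^2 < a^2 -> 4 * a^2 <= u^2 + v^2 -> x^2 + y^2 <= (x - u)^2 + (y - v)^2.
Proof.
  intros. assert (0 <= (u - 2*x)^2 + (v - 2*y)^2)
    by (apply Rplus_le_le_0_compat; apply pow2_ge_0).
  nra.
Qed.

Lemma latdist_near_origin a x y : 0 < a -> x^2 + y^2 < a^2 -> latdist a x y = sqrt (x^2 + y^2).
Proof.
  intros Ha Hr. unfold latdist.
  rewrite (is_glb_Rbar_unique _ (Finite (sqrt (x^2 + y^2)))); [reflexivity|]. split.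
  - intros d [m [n ->]]. apply sqrt_le_1_alt.
    destruct (Z.eq_dec m 0) as [->|Hm]; [destruct (Z.eq_dec n 0) as [->|Hn]|].
    + unfold lat_pt; simpl. lra.
    + apply (sum_sq_le_dist _ _ _ _ a Hr), lat_pt_norm_ge; congruence.
    + apply (sum_sq_le_dist _ _ _ _ a Hr), lat_pt_norm_ge; congruence.
  - intros b Hb. apply Hb. exists 0%Z, 0%Z. unfold lat_pt; simpl. f_equal; ring.
Qed.

Lemma hF_near_axis a x y : 0 < a -> x^2 + y^2 < a^2 -> hF a x y = cos (sqrt (x^2 + y^2)) ^ 2.
Proof. intros Ha H. unfold hF. now rewrite latdist_near_origin. Qed.

Lemma hF_axis a : 0 < a -> hF a 0 0 = 1.
Proof.
  intros Ha. rewrite hF_near_axis by nra.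
  replace (0^2 + 0^2) with 0 by ring. rewrite sqrt_0, cos_0. ring.
Qed.

Lemma hF_pos_near_axis a x y : 0 < a <= PI / 2 -> x^2 + y^2 < a^2 -> 0 < hF a x y.
Proof.
  intros Ha H. rewrite hF_near_axis by lra.
  assert (0 <= sqrt (x^2 + y^2) < a).
  { split; [apply sqrt_pos|]. rewrite <- (sqrt_pow2 a) by lra.
    apply sqrt_lt_1_alt. split; [nra|auto]. }
  assert (0 < cos (sqrt (x^2 + y^2))) by (apply cos_gt_0; pose proof PI_RGT_0; lra). nra.
Qed.

Lemma Rabs_sin_le x : Rabs (sin x) <= Rabs x.
Proof.
  destruct (MVT_abs sin cos 0 x) as [c [Hc _]]; [intros c _; apply derivable_pt_lim_sin|].
  rewrite sin_0, !Rminus_0_r in Hc. rewrite Hc.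
  assert (Rabs (cos c) <= 1) by (apply Rabs_le; pose proof (COS_bound c); lra).
  pose proof (Rabs_pos x). nra.
Qed.

(* [d/dw cos^2 (sqrt w) = grad_coef w / 2] for [w > 0], extended continuously at [w = 0];
   near the axis the gradient of [hF] is [grad_coef (x^2 + y^2) * (x, y)]. *)
Definition grad_coef (w : R) : R :=
  if Req_EM_T w 0 then -2 else - sin (2 * sqrt w) / sqrt w.

Lemma grad_coef_right_continuous_0 e : 0 < e ->
  exists d, 0 < d /\ forall w, 0 <= w < d -> Rabs (grad_coef w + 2) < e.
Proof.
  intros He. pose proof (derivable_pt_lim_sin 0) as Hs. rewrite cos_0 in Hs.
  destruct (Hs (e / 2) ltac:(lra)) as [[d Hd] Hdd]. simpl in Hdd.
  exists ((d / 2) ^ 2). split; [nra|]. intros w [Hw0 Hw1].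
  unfold grad_coef. destruct (Req_EM_T w 0) as [_|E].
  - replace (-2 + 2) with 0 by ring. now rewrite Rabs_R0.
  - assert (Hsw : 0 < sqrt w) by (apply sqrt_lt_R0; lra).
    assert (Hsd : sqrt w < d / 2).
    { rewrite <- (sqrt_pow2 (d / 2)) by lra. apply sqrt_lt_1_alt; lra. }
    specialize (Hdd (2 * sqrt w) ltac:(lra) ltac:(rewrite Rabs_pos_eq; lra)).
    rewrite Rplus_0_l, sin_0, Rminus_0_r in Hdd.
    replace (- sin (2 * sqrt w) / sqrt w + 2)
      with ((-2) * (sin (2 * sqrt w) / (2 * sqrt w) - 1)) by (field; lra).
    rewrite Rabs_mult. replace (Rabs (-2)) with 2 by (rewrite Rabs_left; lra). lra.
Qed.

Lemma is_derive_squeeze0 (f g : R -> R) (t0 b : R) :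
  f t0 = b -> g t0 = 0 -> (forall t, Rabs (f t - b) <= g t) -> is_derive g t0 0 ->
  is_derive f t0 0.
Proof.
  intros Hf Hg Hb Hd. apply is_derive_Reals. apply is_derive_Reals in Hd.
  intros e He. destruct (Hd e He) as [d Hdd]. exists d. intros h Hh Hhd.
  specialize (Hdd h Hh Hhd). rewrite Hg in Hdd. rewrite Hf.
  unfold Rdiv in *. rewrite !Rminus_0_r, Rabs_mult, Rabs_inv in Hdd |- *.
  apply Rle_lt_trans with (2 := Hdd). apply Rmult_le_compat_r.
  - apply Rlt_le, Rinv_0_lt_compat, Rabs_pos_lt, Hh.
  - rewrite Rminus_0_r. eapply Rle_trans; [apply Hb|apply Rle_abs].
Qed.

Lemma is_derive_norm2 (P Q : R -> R) (t0 p q : R) :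
  is_derive P t0 p -> is_derive Q t0 q ->
  is_derive (fun t => P t ^ 2 + Q t ^ 2) t0 (2 * P t0 * p + 2 * Q t0 * q).
Proof. intros HP HQ. apply is_derive_Rplus; now apply is_derive_Rsqr. Qed.

Lemma is_derive_cos2_norm (P Q : R -> R) (t0 p q : R) :
  is_derive P t0 p -> is_derive Q t0 q ->
  is_derive (fun t => cos (sqrt (P t ^ 2 + Q t ^ 2)) ^ 2) t0
    (grad_coef (P t0 ^ 2 + Q t0 ^ 2) * (P t0 * p + Q t0 * q)).
Proof.
  intros HP HQ. pose proof (is_derive_norm2 P Q t0 p q HP HQ) as Hw.
  set (w0 := P t0 ^ 2 + Q t0 ^ 2).
  destruct (Req_dec w0 0) as [Hz|Hnz].
  - (* at the axis [sqrt] is not differentiable: squeeze [1 - cos^2 (sqrt w) <= w] *)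
    assert (HP0 : P t0 = 0) by (unfold w0 in Hz; nra).
    assert (HQ0 : Q t0 = 0) by (unfold w0 in Hz; nra).
    rewrite HP0, HQ0. replace (_ * (0 * p + 0 * q)) with 0 by ring.
    apply (is_derive_squeeze0 _ (fun t => P t ^ 2 + Q t ^ 2) t0 1).
    + rewrite HP0, HQ0. replace (0 ^ 2 + 0 ^ 2) with 0 by ring. rewrite sqrt_0, cos_0. ring.
    + rewrite HP0, HQ0. ring.
    + intros t. set (w := P t ^ 2 + Q t ^ 2).
      assert (Hw0 : 0 <= w) by (unfold w; nra).
      pose proof (sin2_cos2 (sqrt w)) as Hsc. unfold Rsqr in Hsc.
      pose proof (Rabs_sin_le (sqrt w)) as Hsin.
      rewrite (Rabs_pos_eq (sqrt w)) in Hsin by apply sqrt_pos.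
      pose proof (sqrt_sqrt w Hw0) as Hsq.
      assert (Hsin2 : Rabs (sin (sqrt w)) * Rabs (sin (sqrt w)) <= sqrt w * sqrt w)
        by (apply Rmult_le_compat; auto; apply Rabs_pos).
      rewrite <- Rabs_mult, Rabs_pos_eq in Hsin2 by nra.
      rewrite Rabs_left1 by nra. nra.
    + eapply is_derive_eq; [exact Hw|]. rewrite HP0, HQ0. lra.
  - assert (Hpos : 0 < w0) by (unfold w0 in *; nra).
    eapply is_derive_eq.
    + apply (is_derive_pow (fun t => cos (sqrt (P t ^ 2 + Q t ^ 2))) 2).
      apply (is_derive_comp cos (fun t => sqrt (P t ^ 2 + Q t ^ 2))).
      * apply is_derive_cos.
      * apply is_derive_sqrt; [exact Hw|exact Hpos].
    + unfold grad_coef. fold w0. destruct (Req_EM_T w0 0) as [E|_]; [lra|].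
      assert (0 < sqrt w0) by (apply sqrt_lt_R0; auto).
      rewrite sin_2a. simpl. unfold scal; simpl; unfold mult; simpl. field. lra.
Qed.

Lemma is_derive_hF_near_axis a (P Q : R -> R) (t0 p q : R) : 0 < a ->
  is_derive P t0 p -> is_derive Q t0 q -> P t0 ^ 2 + Q t0 ^ 2 < a ^ 2 ->
  is_derive (fun t => hF a (P t) (Q t)) t0
    (grad_coef (P t0 ^ 2 + Q t0 ^ 2) * (P t0 * p + Q t0 * q)).
Proof.
  intros Ha HP HQ Hr.
  eapply is_derive_ext_loc; [|exact (is_derive_cos2_norm P Q t0 p q HP HQ)].
  eapply filter_imp;
    [|exact (locally_lt_of_is_derive _ t0 _ (a ^ 2) (is_derive_norm2 P Q t0 p q HP HQ) Hr)].
  intros u Hu. simpl in Hu. now rewrite hF_near_axis.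
Qed.

Lemma dFx_near_axis a x y : 0 < a -> x ^ 2 + y ^ 2 < a ^ 2 ->
  dFx a x y = grad_coef (x ^ 2 + y ^ 2) * x.
Proof.
  intros Ha H. apply is_derive_unique. eapply is_derive_eq.
  - apply (is_derive_hF_near_axis a (fun u => u) (fun _ => y) x 1 0);
      auto using is_derive_Rid, is_derive_Rconst.
  - simpl; lra.
Qed.

Lemma dFy_near_axis a x y : 0 < a -> x ^ 2 + y ^ 2 < a ^ 2 ->
  dFy a x y = grad_coef (x ^ 2 + y ^ 2) * y.
Proof.
  intros Ha H. apply is_derive_unique. eapply is_derive_eq.
  - apply (is_derive_hF_near_axis a (fun _ => x) (fun u => u) y 0 1);
      auto using is_derive_Rid, is_derive_Rconst.
  - simpl; lra.
Qed.

Lemma dF_axis a : 0 < a -> dFx a 0 0 = 0 /\ dFy a 0 0 = 0.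
Proof. intros Ha. rewrite dFx_near_axis, dFy_near_axis by nra. split; ring. Qed.

Lemma is_derive_hF a (P Q : R -> R) (t0 p q : R) : 0 < a ->
  is_derive P t0 p -> is_derive Q t0 q -> P t0 ^ 2 + Q t0 ^ 2 < a ^ 2 ->
  is_derive (fun t => hF a (P t) (Q t)) t0
    (dFx a (P t0) (Q t0) * p + dFy a (P t0) (Q t0) * q).
Proof.
  intros Ha HP HQ Hr. rewrite dFx_near_axis, dFy_near_axis by auto.
  eapply is_derive_eq; [apply (is_derive_hF_near_axis a P Q t0 p q); auto|ring].
Qed.

Lemma is_derive_mult_vanishing (A B : R -> R) (t0 p : R) :
  A t0 = 0 -> is_derive A t0 p ->
  (forall e, 0 < e -> exists d, 0 < d /\ forall y, Rabs (y - t0) < d -> Rabs (B y - B t0) < e) ->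
  is_derive (fun t => B t * A t) t0 (B t0 * p).
Proof.
  intros HA0 HA HB. apply is_derive_Reals. apply is_derive_Reals in HA.
  intros e He. set (B0 := B t0).
  set (e1 := Rmin 1 (e / (2 * (Rabs p + 1)))).
  set (e2 := e / (2 * (Rabs B0 + 1))).
  pose proof (Rabs_pos p). pose proof (Rabs_pos B0).
  assert (He1 : 0 < e1 <= 1 /\ e1 * Rabs p < e / 2).
  { assert (e1 <= e / (2 * (Rabs p + 1))) by apply Rmin_r.
    assert (e / (2 * (Rabs p + 1)) * Rabs p < e / 2).
    { apply Rlt_le_trans with (e / (2 * (Rabs p + 1)) * (Rabs p + 1)).
      - apply Rmult_lt_compat_l; [apply Rdiv_lt_0_compat|]; lra.
      - right; field; lra. }
    repeat split; [apply Rmin_pos; [|apply Rdiv_lt_0_compat]; lra|apply Rmin_l|nra]. }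
  assert (He2 : 0 < e2 /\ (Rabs B0 + 1) * e2 = e / 2)
    by (unfold e2; split; [apply Rdiv_lt_0_compat|field]; lra).
  destruct (HB e1 (proj1 (proj1 He1))) as [d1 [Hd1 HB1]].
  destruct (HA e2 (proj1 He2)) as [[d2 Hd2] HA2]. simpl in HA2.
  exists (mkposreal _ (Rmin_pos _ _ Hd1 Hd2)). intros h Hh0 Hh. simpl in Hh.
  specialize (HB1 (t0 + h)). replace (t0 + h - t0) with h in HB1 by ring.
  specialize (HB1 (Rlt_le_trans _ _ _ Hh (Rmin_l _ _))).
  specialize (HA2 h Hh0 (Rlt_le_trans _ _ _ Hh (Rmin_r _ _))).
  rewrite HA0, Rminus_0_r in HA2. rewrite HA0, Rmult_0_r, Rminus_0_r. fold B0 in HB1 |- *.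
  set (q := A (t0 + h) / h) in *. set (B1 := B (t0 + h)) in *.
  replace (B1 * A (t0 + h) / h - B0 * p) with (B1 * (q - p) + (B1 - B0) * p)
    by (unfold q; field; auto).
  clearbody q B1 B0 e1 e2.
  assert (Rabs B1 <= Rabs B0 + 1) by (pose proof (Rabs_triang_inv B1 B0); lra).
  assert (Rabs B1 * Rabs (q - p) <= (Rabs B0 + 1) * e2)
    by (apply Rmult_le_compat; try apply Rabs_pos; lra).
  assert (Rabs (B1 - B0) * Rabs p <= e1 * Rabs p) by (apply Rmult_le_compat_r; lra).
  eapply Rle_lt_trans; [apply Rabs_triang|]. rewrite !Rabs_mult. lra.
Qed.

Lemma is_derive_dF_through_axis a (P Q : R -> R) (t0 p q : R) : 0 < a ->
  is_derive P t0 p -> is_derive Q t0 q -> P t0 = 0 -> Q t0 = 0 ->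
  is_derive (fun t => dFx a (P t) (Q t)) t0 (-2 * p) /\
  is_derive (fun t => dFy a (P t) (Q t)) t0 (-2 * q).
Proof.
  intros Ha HP HQ HP0 HQ0.
  pose proof (is_derive_norm2 P Q t0 p q HP HQ) as Hw.
  assert (Hw0 : P t0 ^ 2 + Q t0 ^ 2 = 0) by (rewrite HP0, HQ0; ring).
  assert (Hnear : locally t0 (fun u => P u ^ 2 + Q u ^ 2 < a ^ 2))
    by (apply (locally_lt_of_is_derive _ t0 _ _ Hw); rewrite Hw0; nra).
  set (K := fun t => grad_coef (P t ^ 2 + Q t ^ 2)).
  assert (HK0 : K t0 = -2) by (unfold K, grad_coef; rewrite Hw0; now destruct (Req_EM_T 0 0)).
  assert (HK : forall e, 0 < e ->
            exists d, 0 < d /\ forall y, Rabs (y - t0) < d -> Rabs (K y - K t0) < e).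
  { intros e He. destruct (grad_coef_right_continuous_0 e He) as [d1 [Hd1 Hk]].
    destruct (is_derive_eps_continuous _ t0 _ Hw d1 Hd1) as [d2 [Hd2 Hc]].
    exists d2. split; [exact Hd2|]. intros y Hy. specialize (Hc y Hy).
    rewrite Hw0, Rminus_0_r in Hc. apply Rabs_def2 in Hc.
    rewrite HK0. replace (K y - -2) with (K y + 2) by ring. apply Hk. split; [nra|lra]. }
  split.
  - eapply is_derive_ext_loc;
      [|eapply is_derive_eq; [exact (is_derive_mult_vanishing P K t0 p HP0 HP HK)|]].
    + eapply filter_imp; [|exact Hnear]. intros u Hu. simpl. now rewrite dFx_near_axis.
    + rewrite HK0; ring.
  - eapply is_derive_ext_loc;
      [|eapply is_derive_eq; [exact (is_derive_mult_vanishing Q K t0 q HQ0 HQ HK)|]].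
    + eapply filter_imp; [|exact Hnear]. intros u Hu. simpl. now rewrite dFy_near_axis.
    + rewrite HK0; ring.
Qed.

Lemma uniformly_small_near_0 (f : R -> R -> R) eps eta : 0 < eps -> 0 < eta ->
  (forall t s, Rabs t < eps -> continuous (fun p : R * R => f (fst p) (snd p)) (t, s)) ->
  (forall s, 0 <= s <= 1 -> f 0 s = 0) ->
  exists d, 0 < d /\ forall t s, Rabs t < d -> 0 <= s <= 1 -> Rabs (f t s) < eta.
Proof.
  intros He Heta Hc H0.
  destruct (uniform_continuity_2d_1d' f 0 1 0) with (eps := mkposreal eta Heta) as [d Hd].
  { intros x Hx. apply continuity_2d_pt_filterlim, Hc. now rewrite Rabs_R0. }
  exists d. split; [apply cond_pos|]. intros t s Ht Hs. apply Rabs_def2 in Ht.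
  specialize (Hd s 0 s t Hs ltac:(lra) Hs ltac:(lra)
                ltac:(rewrite Rminus_diag, Rabs_R0; apply cond_pos)).
  simpl in Hd. now rewrite H0, Rminus_0_r in Hd.
Qed.

Lemma harmonic_rotation (J J1 J2 : R -> R) (k : R) : k <> 0 ->
  (forall s, 0 <= s <= 1 ->
     is_derive J s (J1 s) /\ is_derive J1 s (J2 s) /\ J2 s = - k ^ 2 * J s) ->
  J 1 = J 0 * cos k + (J1 0 / k) * sin k /\
  J1 1 / k = - J 0 * sin k + (J1 0 / k) * cos k.
Proof.
  intros Hk H.
  (* the rotated phase-space coordinates are first integrals *)
  pose (P := fun s => J s * cos (k * s) - / k * (J1 s * sin (k * s))).
  pose (Q := fun s => J s * sin (k * s) + / k * (J1 s * cos (k * s))).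
  assert (HP : P 0 = P 1).
  { apply (eq_is_derive P 0 1); [|lra]. intros s Hs. destruct (H s Hs) as [H1 [H2 H3]].
    eapply is_derive_eq.
    - apply is_derive_Rminus; [apply is_derive_Rmult; [exact H1|apply is_derive_cos_lin]|].
      apply is_derive_scal, is_derive_Rmult; [exact H2|apply is_derive_sin_lin].
    - rewrite H3. simpl. unfold zero; simpl. field. auto. }
  assert (HQ : Q 0 = Q 1).
  { apply (eq_is_derive Q 0 1); [|lra]. intros s Hs. destruct (H s Hs) as [H1 [H2 H3]].
    eapply is_derive_eq.
    - apply is_derive_Rplus; [apply is_derive_Rmult; [exact H1|apply is_derive_sin_lin]|].
      apply is_derive_scal, is_derive_Rmult; [exact H2|apply is_derive_cos_lin].
    - rewrite H3. simpl. unfold zero; simpl. field. auto. }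
  unfold P, Q in HP, HQ. rewrite !Rmult_0_r, cos_0, sin_0, !Rmult_1_r in HP, HQ.
  pose proof (sin2_cos2 k) as Hsc. unfold Rsqr in Hsc.
  split.
  - transitivity ((J 1 * cos k - / k * (J1 1 * sin k)) * cos k
                  + (J 1 * sin k + / k * (J1 1 * cos k)) * sin k).
    + replace (J 1) with (J 1 * (sin k * sin k + cos k * cos k)) at 1 by (rewrite Hsc; ring).
      field. auto.
    + rewrite <- HP, <- HQ. field. auto.
  - transitivity (- (J 1 * cos k - / k * (J1 1 * sin k)) * sin k
                  + (J 1 * sin k + / k * (J1 1 * cos k)) * cos k).
    + replace (J1 1 / k) with (J1 1 / k * (sin k * sin k + cos k * cos k)) by (rewrite Hsc; ring).
      field. auto.
    + rewrite <- HP, <- HQ. field. auto.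
Qed.

(* [U = (u, v)] and [B = (bx, by')] are the initial value and scaled initial velocity of a
   planar Jacobi field, [cs, sn = cos c, sin c]; the hypotheses say that its endpoint
   [W = cs U + sn B] is [U] rotated by the angle of cosine [ct] and sine [st].  As
   [|W| = |U|] and [<W, U> = ct |U|^2], [sn] times the form equals [2 (cs - ct) |U|^2]. *)
Lemma jacobi_boundary_form_pos (u v bx by' cs sn ct st : R) :
  0 < sn -> ct < cs -> sn * sn + cs * cs = 1 -> st * st + ct * ct = 1 ->
  (u, v) <> (0, 0) ->
  u * cs + bx * sn = u * ct - v * st -> v * cs + by' * sn = u * st + v * ct ->
  0 < (u * cs + bx * sn) * (- u * sn + bx * cs) + (v * cs + by' * sn) * (- v * sn + by' * cs)
      - (u * bx + v * by').
Proof.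
  intros Hsn Hc Hsc Hst Huv Hx Hy.
  set (wx := u * cs + bx * sn) in *. set (wy := v * cs + by' * sn) in *.
  assert (HU : 0 < u * u + v * v).
  { destruct (Req_dec u 0) as [->|]; destruct (Req_dec v 0) as [->|]; try nra.
    exfalso; now apply Huv. }
  assert (E1 : sn * (wx * (- u * sn + bx * cs) + wy * (- v * sn + by' * cs) - (u * bx + v * by'))
               = cs * (wx * wx + wy * wy) - 2 * (wx * u + wy * v) + cs * (u * u + v * v)).
  { unfold wx, wy. replace (sn * sn) with (1 - cs * cs) by lra. ring_simplify.
    replace (sn ^ 2) with (1 - cs ^ 2) by (simpl; lra). ring_simplify.
    replace (sn ^ 3) with (sn * (1 - cs ^ 2)) by (simpl; nra). ring. }
  assert (E2 : wx * wx + wy * wy = u * u + v * v).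
  { rewrite Hx, Hy.
    replace (u * u + v * v) with ((u * u + v * v) * (st * st + ct * ct)) by (rewrite Hst; ring).
    ring. }
  assert (E3 : wx * u + wy * v = ct * (u * u + v * v)) by (rewrite Hx, Hy; ring).
  rewrite E2, E3 in E1. nra.
Qed.

Lemma h_geodesic_second_derivatives a (X Y Z : R -> R) (s x2 y2 z2 : R) :
  is_h_geodesic a X Y Z -> 0 <= s <= 1 ->
  is_derive (Derive X) s x2 -> is_derive (Derive Y) s y2 -> is_derive (Derive Z) s z2 ->
  x2 = / 2 * dFx a (X s) (Y s) * Derive Z s ^ 2 /\
  y2 = / 2 * dFy a (X s) (Y s) * Derive Z s ^ 2 /\
  z2 = - (dFx a (X s) (Y s) * Derive X s + dFy a (X s) (Y s) * Derive Y s) * Derive Z s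
         / hF a (X s) (Y s).
Proof.
  intros [X1 [Y1 [Z1 [X2 [Y2 [Z2 HG]]]]]] Hs Hx2 Hy2 Hz2.
  assert (E1 : forall r, 0 <= r <= 1 ->
            X1 r = Derive X r /\ Y1 r = Derive Y r /\ Z1 r = Derive Z r).
  { intros r Hr. destruct (HG r Hr) as [_ [HX1 [HY1 [HZ1 _]]]].
    now rewrite (is_derive_unique _ _ _ HX1), (is_derive_unique _ _ _ HY1),
      (is_derive_unique _ _ _ HZ1). }
  destruct (HG s Hs) as [_ [_ [_ [_ [HX2 [HY2 [HZ2 [EX [EY EZ]]]]]]]]].
  assert (x2 = X2 s /\ y2 = Y2 s /\ z2 = Z2 s) as [-> [-> ->]].
  { repeat split; [apply (is_derive_agree_01 (Derive X) X1 s)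
                  |apply (is_derive_agree_01 (Derive Y) Y1 s)
                  |apply (is_derive_agree_01 (Derive Z) Z1 s)]; auto;
      intros r Hr; symmetry; apply E1, Hr. }
  destruct (E1 s Hs) as [<- [<- <-]]. auto.
Qed.

Lemma le_half_pi_of_hex a : 0 < a -> 2 * a / sqrt 3 < PI / 2 -> a <= PI / 2.
Proof.
  intros Ha H. assert (Hs3 : 0 < sqrt 3 < 2).
  { split; [apply sqrt_lt_R0; lra|].
    rewrite <- (sqrt_pow2 2) by lra. apply sqrt_lt_1_alt; lra. }
  enough (a <= 2 * a / sqrt 3) by lra.
  apply Rmult_le_reg_r with (sqrt 3); [lra|].
  unfold Rdiv. rewrite Rmult_assoc, Rinv_l by lra. nra.
Qed.

Section SecondVariation.

Variables (a c z0 eps : R) (X Y Z : R -> R -> R).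
Hypothesis Ha : 0 < a <= PI / 2.
Hypothesis Hc : 0 < c < 2 * PI / 3.
Hypothesis Heps : 0 < eps.
Hypotheses (SX : smooth2 eps X) (SY : smooth2 eps Y) (SZ : smooth2 eps Z).
Hypothesis Haxis : forall s, 0 <= s <= 1 -> X 0 s = 0 /\ Y 0 s = 0 /\ Z 0 s = z0 + c * s.
Hypothesis Hgeo : forall t, Rabs t < eps ->
  is_h_geodesic a (X t) (Y t) (Z t) /\ (X t 1, Y t 1, Z t 1) = phi c (X t 0, Y t 0, Z t 0).

Let H0eps : Rabs 0 < eps.
Proof. now rewrite Rabs_R0. Qed.

Definition energy (t s : R) : R :=
  Ds X t s ^ 2 + Ds Y t s ^ 2 + hF a (X t s) (Y t s) * Ds Z t s ^ 2.

Definition energy_dt (t s : R) : R :=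
  2 * Ds X t s * Ds (Dt X) t s + 2 * Ds Y t s * Ds (Dt Y) t s +
  ((dFx a (X t s) (Y t s) * Dt X t s + dFy a (X t s) (Y t s) * Dt Y t s) * Ds Z t s ^ 2 +
   hF a (X t s) (Y t s) * (2 * Ds Z t s * Ds (Dt Z) t s)).

(* [h(d gamma/dt, d gamma/ds)]; its jump between [s = 0] and [s = 1] is the first variation. *)
Definition variation_dot (t s : R) : R :=
  Dt X t s * Ds X t s + Dt Y t s * Ds Y t s + hF a (X t s) (Y t s) * (Dt Z t s * Ds Z t s).

Lemma geodesic_equations t s : Rabs t < eps -> 0 <= s <= 1 ->
  Ds (Ds X) t s = / 2 * dFx a (X t s) (Y t s) * Ds Z t s ^ 2 /\
  Ds (Ds Y) t s = / 2 * dFy a (X t s) (Y t s) * Ds Z t s ^ 2 /\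
  Ds (Ds Z) t s = - (dFx a (X t s) (Y t s) * Ds X t s + dFy a (X t s) (Y t s) * Ds Y t s)
                  * Ds Z t s / hF a (X t s) (Y t s).
Proof.
  intros Ht Hs. apply (h_geodesic_second_derivatives a (X t) (Y t) (Z t) s); auto.
  - apply Hgeo, Ht.
  - exact (smooth2_is_derive_s eps (Ds X) (smooth2_Ds _ _ SX) t s Ht).
  - exact (smooth2_is_derive_s eps (Ds Y) (smooth2_Ds _ _ SY) t s Ht).
  - exact (smooth2_is_derive_s eps (Ds Z) (smooth2_Ds _ _ SZ) t s Ht).
Qed.

Lemma endpoint_rotation t : Rabs t < eps ->
  X t 1 = X t 0 * cos (2 * PI / 3) - Y t 0 * sin (2 * PI / 3) /\
  Y t 1 = X t 0 * sin (2 * PI / 3) + Y t 0 * cos (2 * PI / 3) /\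
  Z t 1 = Z t 0 + c.
Proof. intros Ht. destruct (Hgeo t Ht) as [_ HE]. unfold phi in HE. now injection HE. Qed.

Lemma Ds_axis s : 0 <= s <= 1 -> Ds X 0 s = 0 /\ Ds Y 0 s = 0 /\ Ds Z 0 s = c.
Proof.
  intros Hs. repeat split.
  - apply (is_derive_agree_01 (X 0) (fun _ => 0) s); auto using is_derive_Rconst.
    + intros r Hr. apply Haxis, Hr.
    + now apply (smooth2_is_derive_s eps).
  - apply (is_derive_agree_01 (Y 0) (fun _ => 0) s); auto using is_derive_Rconst.
    + intros r Hr. apply Haxis, Hr.
    + now apply (smooth2_is_derive_s eps).
  - apply (is_derive_agree_01 (Z 0) (fun r => z0 + c * r) s); auto.
    + intros r Hr. apply Haxis, Hr.
    + now apply (smooth2_is_derive_s eps).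
    + eapply is_derive_eq;
        [apply is_derive_Rplus; [apply is_derive_Rconst|apply is_derive_scal, is_derive_Rid]|ring].
Qed.

Lemma energy_axis : energy 0 0 = c ^ 2.
Proof.
  assert (H01 : 0 <= 0 <= 1) by lra.
  unfold energy. destruct (Ds_axis 0 H01) as [-> [-> ->]].
  destruct (Haxis 0 H01) as [-> [-> _]]. rewrite hF_axis by lra. ring.
Qed.

Lemma jacobi_equation s : 0 <= s <= 1 ->
  Ds (Ds (Dt X)) 0 s = - c ^ 2 * Dt X 0 s /\ Ds (Ds (Dt Y)) 0 s = - c ^ 2 * Dt Y 0 s.
Proof.
  intros Hs. destruct (Haxis s Hs) as [X0 [Y0 _]]. destruct (Ds_axis s Hs) as [_ [_ Zs0]].
  destruct (dF_axis a (proj1 Ha)) as [dFx0 dFy0].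
  destruct (is_derive_dF_through_axis a (fun w => X w s) (fun w => Y w s) 0 (Dt X 0 s) (Dt Y 0 s)
              (proj1 Ha) (smooth2_is_derive_t eps X SX 0 s H0eps)
              (smooth2_is_derive_t eps Y SY 0 s H0eps) X0 Y0) as [DdFx DdFy].
  pose proof (is_derive_Rsqr _ _ _ (smooth2_is_derive_t_Ds eps Z 0 s SZ H0eps)) as DZs2.
  split.
  - apply (is_derive_unique_strip (fun w => Ds (Ds X) w s)
             (fun w => / 2 * dFx a (X w s) (Y w s) * Ds Z w s ^ 2) eps 0); auto.
    + intros w Hw. now apply geodesic_equations.
    + now apply (smooth2_is_derive_t_Ds2 eps).
    + eapply is_derive_eq; [apply is_derive_Rmult; [apply is_derive_scal, DdFx|apply DZs2]|].
      cbv beta. rewrite X0, Y0, dFx0, Zs0. field.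
  - apply (is_derive_unique_strip (fun w => Ds (Ds Y) w s)
             (fun w => / 2 * dFy a (X w s) (Y w s) * Ds Z w s ^ 2) eps 0); auto.
    + intros w Hw. now apply geodesic_equations.
    + now apply (smooth2_is_derive_t_Ds2 eps).
    + eapply is_derive_eq; [apply is_derive_Rmult; [apply is_derive_scal, DdFy|apply DZs2]|].
      cbv beta. rewrite X0, Y0, dFy0, Zs0. field.
Qed.

Lemma Dt_endpoint_rotation :
  Dt X 0 1 = Dt X 0 0 * cos (2 * PI / 3) - Dt Y 0 0 * sin (2 * PI / 3) /\
  Dt Y 0 1 = Dt X 0 0 * sin (2 * PI / 3) + Dt Y 0 0 * cos (2 * PI / 3) /\
  Dt Z 0 1 = Dt Z 0 0 /\ Dt (Dt Z) 0 1 = Dt (Dt Z) 0 0.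
Proof.
  assert (DZ1 : forall t, Rabs t < eps -> Dt Z t 1 = Dt Z t 0).
  { intros t Ht. transitivity (Dt Z t 0 + 0); [|ring].
    apply (is_derive_unique_strip (fun w => Z w 1) (fun w => Z w 0 + c) eps t); auto.
    - intros w Hw. apply endpoint_rotation, Hw.
    - now apply (smooth2_is_derive_t eps).
    - apply is_derive_Rplus; [now apply (smooth2_is_derive_t eps)|apply is_derive_Rconst]. }
  pose proof (smooth2_is_derive_t eps X SX 0 0 H0eps) as DX.
  pose proof (smooth2_is_derive_t eps Y SY 0 0 H0eps) as DY.
  repeat split.
  - apply (is_derive_unique_strip (fun w => X w 1)
             (fun w => X w 0 * cos (2 * PI / 3) - Y w 0 * sin (2 * PI / 3)) eps 0); auto.
    + intros w Hw. apply endpoint_rotation, Hw.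
    + now apply (smooth2_is_derive_t eps).
    + eapply is_derive_eq.
      * apply is_derive_Rminus; apply is_derive_Rmult; eauto using is_derive_Rconst.
      * cbv beta; ring.
  - apply (is_derive_unique_strip (fun w => Y w 1)
             (fun w => X w 0 * sin (2 * PI / 3) + Y w 0 * cos (2 * PI / 3)) eps 0); auto.
    + intros w Hw. apply endpoint_rotation, Hw.
    + now apply (smooth2_is_derive_t eps).
    + eapply is_derive_eq.
      * apply is_derive_Rplus; apply is_derive_Rmult; eauto using is_derive_Rconst.
      * cbv beta; ring.
  - now apply DZ1.
  - apply (is_derive_unique_strip (fun w => Dt Z w 1) (fun w => Dt Z w 0) eps 0); auto;
      apply (smooth2_is_derive_t eps); auto; now apply smooth2_Dt.
Qed.

Lemma is_derive_variation_dot_axis j : 0 <= j <= 1 ->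
  is_derive (fun t => variation_dot t j) 0
    (Dt X 0 j * Ds (Dt X) 0 j + Dt Y 0 j * Ds (Dt Y) 0 j +
     (c * Dt (Dt Z) 0 j + Dt Z 0 j * Ds (Dt Z) 0 j)).
Proof.
  intros Hj. destruct (Haxis j Hj) as [X0 [Y0 _]]. destruct (Ds_axis j Hj) as [Xs0 [Ys0 Zs0]].
  assert (Hd : forall f, smooth2 eps f ->
            is_derive (fun t => Dt f t j * Ds f t j) 0
              (Dt (Dt f) 0 j * Ds f 0 j + Dt f 0 j * Ds (Dt f) 0 j)).
  { intros f Hf. apply (is_derive_Rmult (fun t => Dt f t j) (fun t => Ds f t j));
      [|now apply (smooth2_is_derive_t_Ds eps)].
    exact (smooth2_is_derive_t eps (Dt f) (smooth2_Dt _ _ Hf) 0 j H0eps). }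
  unfold variation_dot. eapply is_derive_eq.
  - apply is_derive_Rplus; [apply is_derive_Rplus; now apply Hd|].
    apply is_derive_Rmult; [|now apply Hd].
    apply (is_derive_hF a (fun t => X t j) (fun t => Y t j) 0 (Dt X 0 j) (Dt Y 0 j));
      [apply Ha| now apply (smooth2_is_derive_t eps) | now apply (smooth2_is_derive_t eps)|].
    rewrite X0, Y0. nra.
  - cbv beta. rewrite X0, Y0, Xs0, Ys0, Zs0, hF_axis by apply Ha.
    destruct (dF_axis a (proj1 Ha)) as [-> ->]. ring.
Qed.

Lemma jacobi_field_rotation (f : R -> R -> R) : smooth2 eps f ->
  (forall s, 0 <= s <= 1 -> Ds (Ds (Dt f)) 0 s = - c ^ 2 * Dt f 0 s) ->
  Dt f 0 1 = Dt f 0 0 * cos c + (Ds (Dt f) 0 0 / c) * sin c /\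
  Ds (Dt f) 0 1 / c = - Dt f 0 0 * sin c + (Ds (Dt f) 0 0 / c) * cos c.
Proof.
  intros Hf HJ. apply (harmonic_rotation (fun s => Dt f 0 s) (fun s => Ds (Dt f) 0 s)
                         (fun s => Ds (Ds (Dt f)) 0 s)); [lra|].
  intros s Hs. split; [|split; [|now apply HJ]].
  - apply (smooth2_is_derive_s eps); [apply smooth2_Dt|]; auto.
  - apply (smooth2_is_derive_s eps); [apply smooth2_Ds, smooth2_Dt|]; auto.
Qed.

Lemma jacobi_boundary_pos : (Dt X 0 0, Dt Y 0 0) <> (0, 0) ->
  0 < Dt X 0 1 * Ds (Dt X) 0 1 + Dt Y 0 1 * Ds (Dt Y) 0 1
      - (Dt X 0 0 * Ds (Dt X) 0 0 + Dt Y 0 0 * Ds (Dt Y) 0 0).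
Proof.
  intros Huv.
  destruct (jacobi_field_rotation X SX (fun s Hs => proj1 (jacobi_equation s Hs))) as [RX1 RX2].
  destruct (jacobi_field_rotation Y SY (fun s Hs => proj2 (jacobi_equation s Hs))) as [RY1 RY2].
  destruct Dt_endpoint_rotation as [EX [EY _]].
  set (u := Dt X 0 0) in *. set (v := Dt Y 0 0) in *.
  set (bx := Ds (Dt X) 0 0 / c) in *. set (by' := Ds (Dt Y) 0 0 / c) in *.
  assert (Hs : 0 < sin c) by (apply sin_gt_0; pose proof PI_RGT_0; lra).
  assert (Hcos : cos (2 * PI / 3) < cos c)
    by (apply cos_decreasing_1; pose proof PI_RGT_0; lra).
  pose proof (sin2_cos2 c) as Hsc. pose proof (sin2_cos2 (2 * PI / 3)) as Hst.
  unfold Rsqr in Hsc, Hst.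
  pose proof (jacobi_boundary_form_pos u v bx by' (cos c) (sin c) _ _ Hs Hcos Hsc Hst Huv
                ltac:(now rewrite <- RX1) ltac:(now rewrite <- RY1)) as Hpos.
  replace (Ds (Dt X) 0 1) with (c * (- u * sin c + bx * cos c)) by (rewrite <- RX2; field; lra).
  replace (Ds (Dt Y) 0 1) with (c * (- v * sin c + by' * cos c)) by (rewrite <- RY2; field; lra).
  replace (Ds (Dt X) 0 0) with (c * bx) by (unfold bx; field; lra).
  replace (Ds (Dt Y) 0 0) with (c * by') by (unfold by'; field; lra).
  rewrite RX1, RY1. nra.
Qed.

(* Continuity at [t = 0] keeps the curves in the disc where [hF] is explicit. *)
Lemma near_axis : exists delta, 0 < delta <= eps /\
  forall t s, Rabs t < delta -> 0 <= s <= 1 -> X t s ^ 2 + Y t s ^ 2 < a ^ 2.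
Proof.
  assert (Ha2 : 0 < a / 2) by lra.
  destruct (uniformly_small_near_0 X eps (a / 2) Heps Ha2 (smooth2_continuous eps X SX))
    as [dX [HdX HX]]; [intros s Hs; apply Haxis, Hs|].
  destruct (uniformly_small_near_0 Y eps (a / 2) Heps Ha2 (smooth2_continuous eps Y SY))
    as [dY [HdY HY]]; [intros s Hs; apply Haxis, Hs|].
  exists (Rmin eps (Rmin dX dY)). split; [split; [repeat apply Rmin_pos; auto|apply Rmin_l]|].
  intros t s Ht Hs.
  assert (HtX : Rabs t < dX) by (eapply Rlt_le_trans; [exact Ht|];
                                 eapply Rle_trans; [apply Rmin_r|apply Rmin_l]).
  assert (HtY : Rabs t < dY) by (eapply Rlt_le_trans; [exact Ht|];
                                 eapply Rle_trans; [apply Rmin_r|apply Rmin_r]).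
  specialize (HX t s HtX Hs). specialize (HY t s HtY Hs).
  rewrite <- (pow2_abs (X t s)), <- (pow2_abs (Y t s)).
  pose proof (Rabs_pos (X t s)). pose proof (Rabs_pos (Y t s)). nra.
Qed.

Section NearAxis.

Variable delta : R.
Hypothesis Hdelta : 0 < delta <= eps.
Hypothesis Hnear : forall t s, Rabs t < delta -> 0 <= s <= 1 -> X t s ^ 2 + Y t s ^ 2 < a ^ 2.

Let in_strip t : Rabs t < delta -> Rabs t < eps.
Proof. lra. Qed.

Lemma is_derive_energy_s t r : Rabs t < delta -> 0 <= r <= 1 ->
  is_derive (fun s => energy t s) r 0.
Proof.
  intros Ht Hr. pose proof (in_strip t Ht) as Ht'.
  destruct (geodesic_equations t r Ht' Hr) as [E1 [E2 E3]].
  assert (Hpos := hF_pos_near_axis a _ _ Ha (Hnear t r Ht Hr)).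
  unfold energy. eapply is_derive_eq.
  - apply is_derive_Rplus; [apply is_derive_Rplus|].
    + apply is_derive_Rsqr, (smooth2_is_derive_s eps); [apply smooth2_Ds|]; auto.
    + apply is_derive_Rsqr, (smooth2_is_derive_s eps); [apply smooth2_Ds|]; auto.
    + apply is_derive_Rmult.
      * apply (is_derive_hF a (fun s => X t s) (fun s => Y t s) r (Ds X t r) (Ds Y t r));
          [apply Ha|apply (smooth2_is_derive_s eps)..|apply Hnear]; auto.
      * apply is_derive_Rsqr, (smooth2_is_derive_s eps); [apply smooth2_Ds|]; auto.
  - cbv beta. rewrite E1, E2, E3. field. lra.
Qed.

Lemma energy_const t s : Rabs t < delta -> 0 <= s <= 1 -> energy t s = energy t 0.
Proof.
  intros Ht Hs. destruct (Req_dec s 0) as [->|Hs0]; [reflexivity|].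
  symmetry. apply (eq_is_derive (fun s => energy t s) 0 s); [|lra].
  intros r Hr. apply is_derive_energy_s; [exact Ht|lra].
Qed.

Lemma is_derive_energy_t t s : Rabs t < delta -> 0 <= s <= 1 ->
  is_derive (fun u => energy u s) t (energy_dt t s).
Proof.
  intros Ht Hs. pose proof (in_strip t Ht) as Ht'.
  unfold energy, energy_dt. eapply is_derive_eq.
  - apply is_derive_Rplus; [apply is_derive_Rplus|].
    + apply is_derive_Rsqr, (smooth2_is_derive_t_Ds eps); auto.
    + apply is_derive_Rsqr, (smooth2_is_derive_t_Ds eps); auto.
    + apply is_derive_Rmult.
      * apply (is_derive_hF a (fun u => X u s) (fun u => Y u s) t (Dt X t s) (Dt Y t s));
          [apply Ha|apply (smooth2_is_derive_t eps)..|apply Hnear]; auto.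
      * apply is_derive_Rsqr, (smooth2_is_derive_t_Ds eps); auto.
  - cbv beta. ring.
Qed.

Lemma energy_dt_const t s : Rabs t < delta -> 0 <= s <= 1 -> energy_dt t s = energy_dt t 0.
Proof.
  intros Ht Hs. apply (is_derive_unique_strip (fun u => energy u s) (fun u => energy u 0) delta t);
    auto using is_derive_energy_t.
  - intros w Hw. now apply energy_const.
  - apply is_derive_energy_t; [exact Ht|lra].
Qed.

Lemma is_derive_variation_dot_s t r : Rabs t < delta -> 0 <= r <= 1 ->
  is_derive (fun s => variation_dot t s) r (/ 2 * energy_dt t r).
Proof.
  intros Ht Hr. pose proof (in_strip t Ht) as Ht'.
  destruct (geodesic_equations t r Ht' Hr) as [E1 [E2 E3]].
  assert (Hpos := hF_pos_near_axis a _ _ Ha (Hnear t r Ht Hr)).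
  assert (Hd : forall f, smooth2 eps f ->
            is_derive (fun s => Dt f t s * Ds f t s) r
              (Ds (Dt f) t r * Ds f t r + Dt f t r * Ds (Ds f) t r)).
  { intros f Hf. apply (is_derive_Rmult (fun s => Dt f t s) (fun s => Ds f t s)).
    - apply (smooth2_is_derive_s eps); [apply smooth2_Dt|]; auto.
    - apply (smooth2_is_derive_s eps); [apply smooth2_Ds|]; auto. }
  unfold variation_dot. eapply is_derive_eq.
  - apply is_derive_Rplus; [apply is_derive_Rplus; now apply Hd|].
    apply is_derive_Rmult; [|now apply Hd].
    apply (is_derive_hF a (fun s => X t s) (fun s => Y t s) r (Ds X t r) (Ds Y t r));
      [apply Ha|apply (smooth2_is_derive_s eps)..|apply Hnear]; auto.
  - cbv beta. rewrite E1, E2, E3. unfold energy_dt. field. lra.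
Qed.

Lemma first_variation t : Rabs t < delta ->
  variation_dot t 1 - variation_dot t 0 = / 2 * energy_dt t 0.
Proof.
  intros Ht.
  set (g := fun s => variation_dot t s - s * (/ 2 * energy_dt t 0)).
  enough (G : g 0 = g 1) by (unfold g in G; lra).
  apply (eq_is_derive g 0 1); [|lra]. intros r Hr. eapply is_derive_eq.
  - apply is_derive_Rminus; [apply is_derive_variation_dot_s; auto|].
    apply is_derive_Rmult; [apply is_derive_Rid|apply is_derive_Rconst].
  - rewrite energy_dt_const by auto. unfold zero; simpl. ring.
Qed.

Lemma length_sqrt_energy t : Rabs t < delta -> Lh a (X t) (Y t) (Z t) = sqrt (energy t 0).
Proof.
  intros Ht. unfold Lh. rewrite (RInt_ext _ (fun _ => sqrt (energy t 0))).
  - rewrite RInt_const. unfold scal; simpl; unfold mult; simpl. ring.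
  - intros s Hs. rewrite Rmin_left, Rmax_right in Hs by lra.
    rewrite <- (energy_const t s Ht) by lra. reflexivity.
Qed.

Lemma energy_pos_near_0 : exists d, 0 < d <= delta /\ forall t, Rabs t < d -> 0 < energy t 0.
Proof.
  assert (H0 : Rabs 0 < delta) by (rewrite Rabs_R0; lra).
  destruct (locally_lt_of_is_derive (fun t => -1 * energy t 0) 0 _ 0
              (is_derive_scal _ _ (-1) _ (is_derive_energy_t 0 0 H0 ltac:(lra))))
    as [d Hd]; [rewrite energy_axis; nra|].
  exists (Rmin delta d). split; [split; [apply Rmin_pos; [lra|apply cond_pos]|apply Rmin_l]|].
  intros t Ht. enough (-1 * energy t 0 < 0) by lra. apply Hd.
  change (Rabs (t - 0) < d). rewrite Rminus_0_r.
  eapply Rlt_le_trans; [exact Ht|apply Rmin_r].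
Qed.

Lemma is_derive_length t : Rabs t < delta -> 0 < energy t 0 ->
  is_derive (fun t' => Lh a (X t') (Y t') (Z t')) t
    ((variation_dot t 1 - variation_dot t 0) / sqrt (energy t 0)).
Proof.
  intros Ht Hpos. eapply is_derive_ext_loc.
  - apply (locally_strip delta t); [exact Ht|]. intros w Hw. symmetry. now apply length_sqrt_energy.
  - eapply is_derive_eq; [apply is_derive_sqrt; [apply is_derive_energy_t; auto; lra|exact Hpos]|].
    rewrite first_variation by auto. assert (0 < sqrt (energy t 0)) by now apply sqrt_lt_R0.
    field. lra.
Qed.

End NearAxis.

Lemma second_variation_pos (u v : R) : (u, v) <> (0, 0) ->
  is_derive (fun t => X t 0) 0 u -> is_derive (fun t => Y t 0) 0 v ->
  is_derive (fun t => Z t 0) 0 0 ->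
  exists (L1 : R -> R) (d2 : R),
    (exists delta, 0 < delta /\ forall t, Rabs t < delta ->
        is_derive (fun t' => Lh a (X t') (Y t') (Z t')) t (L1 t)) /\
    is_derive L1 0 d2 /\ 0 < d2.
Proof.
  intros Huv Hu Hv Hz.
  destruct near_axis as [delta [Hdelta Hnear]].
  destruct (energy_pos_near_0 delta Hdelta Hnear) as [d [Hd Hpos]].
  apply is_derive_unique in Hu, Hv, Hz. change (Dt X 0 0 = u) in Hu.
  change (Dt Y 0 0 = v) in Hv. change (Dt Z 0 0 = 0) in Hz.
  destruct Dt_endpoint_rotation as [_ [_ [Zt1 Ztt1]]].
  assert (N0 : variation_dot 0 1 - variation_dot 0 0 = 0).
  { unfold variation_dot. rewrite Zt1, Hz.
    destruct (Ds_axis 0 ltac:(lra)) as [-> [-> _]]. destruct (Ds_axis 1 ltac:(lra)) as [-> [-> _]].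
    ring. }
  assert (Hd0 : Rabs 0 < delta) by (rewrite Rabs_R0; lra).
  exists (fun t => (variation_dot t 1 - variation_dot t 0) / sqrt (energy t 0)).
  eexists. split; [|split].
  - exists d. split; [lra|]. intros t Ht.
    apply (is_derive_length delta); [exact Hdelta|exact Hnear|lra|now apply Hpos].
  - apply is_derive_div.
    + apply is_derive_Rminus; apply is_derive_variation_dot_axis; lra.
    + apply is_derive_sqrt; [apply (is_derive_energy_t delta); auto; lra|].
      rewrite energy_axis. nra.
    + rewrite energy_axis, sqrt_pow2; lra.
  - cbv beta. rewrite N0, energy_axis, sqrt_pow2, Ztt1, Zt1, Hz by lra.
    pose proof (jacobi_boundary_pos ltac:(now rewrite Hu, Hv)).
    apply Rdiv_lt_0_compat; [|nra].
    match goal with |- 0 < ?N => replace N with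
      ((Dt X 0 1 * Ds (Dt X) 0 1 + Dt Y 0 1 * Ds (Dt Y) 0 1
        - (Dt X 0 0 * Ds (Dt X) 0 0 + Dt Y 0 0 * Ds (Dt Y) 0 0)) * c) by ring end.
    apply Rmult_lt_0_compat; lra.
Qed.

End SecondVariation.

Theorem mainTheorem9 (a c z0 eps : R) (X Y Z : R -> R -> R) :
  0 < a -> 2 * a / sqrt 3 < PI / 2 ->
  0 < c < 2 * PI / 3 ->
  0 < eps ->
  smooth2 eps X -> smooth2 eps Y -> smooth2 eps Z ->
  (forall s, 0 <= s <= 1 -> X 0 s = 0 /\ Y 0 s = 0 /\ Z 0 s = z0 + c * s) ->
  (forall t, Rabs t < eps ->
     is_h_geodesic a (X t) (Y t) (Z t) /\
     (X t 1, Y t 1, Z t 1) = phi c (X t 0, Y t 0, Z t 0)) ->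
  (exists u v : R, (u, v) <> (0, 0) /\
     is_derive (fun t => X t 0) 0 u /\ is_derive (fun t => Y t 0) 0 v /\
     is_derive (fun t => Z t 0) 0 0) ->
  exists (L1 : R -> R) (d2 : R),
    (exists delta, 0 < delta /\ forall t, Rabs t < delta ->
        is_derive (fun t' => Lh a (X t') (Y t') (Z t')) t (L1 t)) /\
    is_derive L1 0 d2 /\ 0 < d2.
Proof.
  intros Ha Hhex Hc Heps SX SY SZ Haxis Hgeo [u [v [Huv [Hu [Hv Hz]]]]].
  exact (second_variation_pos a c z0 eps X Y Z (conj Ha (le_half_pi_of_hex a Ha Hhex))
           Hc Heps SX SY SZ Haxis Hgeo u v Huv Hu Hv Hz).
Qed.
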